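(* Suppose Assumptions A(b)–A(c) hold (and the ADMM iterates are well defined). Let $\{(x^r,y^r)\}$ be generated by the ADMM algorithm. Then there exists a constant $\sigma>0$, independent of $y^r$, such that $$\|\tilde\nabla_x L(x^r;y^r)\|\le\sigma\|x^{r+1}-x^r\|\qquad\text{for all } r\ge1.$$
   Context: Let $x=(x_1^T,\dots,x_K^T)^T\in\mathbb{R}^n$ be partitioned into blocks, $E=(E_1,\dots,E_K)\in\mathbb{R}^{m\times n}$ partitioned accordingly, $q\in\mathbb{R}^m$, $X=\prod_kX_k$. Objective $f(x)=\sum_kf_k(x_k)$ with (A(b)) $f_k(x_k)=g_k(A_kx_k)+h_k(x_k)$, $g_k,h_k$ convex and continuous on their domains, $A_k$ given matrices; (A(c)) each $g_k$ is strictly convex and continuously differentiable on the interior of its domain and there is $L>0$ with $\|A_k^T\nabla g_k(A_kx_k)-A_k^T\nabla g_k(A_kx_k')\|\le L\|x_k-x_k'\|$ for all $x_k,x_k'\in X_k$. The constraint $x_k\in X_k$ is absorbed into $h_k$ via its indicator function; $h(x)=\sum_kh_k(x_k)$, $g(Ax)=\sum_kg_k(A_kx_k)$. For $\rho>0$, $L(x;y)=f(x)+\langle y,q-Ex\rangle+\frac{\rho}{2}\|q-Ex\|^2$. $\mathrm{prox}_h(v)=\arg\min_u h(u)+\frac12\|v-u\|^2$; the proximal gradient is $\tilde\nabla_xL(x;y)=x-\mathrm{prox}_h\big(x-A^T\nabla g(Ax)+E^Ty-\rho E^T(Ex-q)\big)$, where $A^T\nabla g(Ax)$ has blocks $A_k^T\nabla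 g_k(A_kx_k)$. ADMM with dual stepsize $\alpha>0$: from $(x^0,y^0)$, for $r=0,1,\dots$, compute for $k=1,\dots,K$ in order $x_k^{r+1}=\arg\min_{x_k\in X_k}L(x_1^{r+1},\dots,x_{k-1}^{r+1},x_k,x_{k+1}^r,\dots,x_K^r;y^r)$, then $y^{r+1}=y^r+\alpha(q-Ex^{r+1})$. *)

From HB Require Import structures.
From mathcomp Require Import all_boot all_order all_algebra.
Unset Printing Implicit Defensive.
Import Order.TTheory GRing.Theory Num.Theory.
Local Open Scope ring_scope.

Definition dotv {R : numDomainType} {n : nat} (u v : 'cV[R]_n) : R :=
  \sum_(i < n) u i 0 * v i 0.
Definition normv {R : rcfType} {n : nat} (u : 'cV[R]_n) : R :=
  Num.sqrt (dotv u u).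

(* An extended-valued function is represented by a real-valued function f
   together with its (effective) domain D; f = +oo outside D. *)
Definition convex_set {R : rcfType} {n : nat} (D : 'cV[R]_n -> Prop) :=
  forall u v (t : R), D u -> D v -> 0 <= t <= 1 -> D (t *: u + (1 - t) *: v).

Definition convex_fun_on {R : rcfType} {n : nat} (D : 'cV[R]_n -> Prop) (f : 'cV[R]_n -> R) :=
  convex_set D /\
  forall u v (t : R), D u -> D v -> 0 <= t <= 1 ->
    f (t *: u + (1 - t) *: v) <= t * f u + (1 - t) * f v.

Definition strictly_convex_on {R : rcfType} {n : nat} (D : 'cV[R]_n -> Prop) (f : 'cV[R]_n -> R) :=
  convex_set D /\
  forall u v (t : R), D u -> D v -> u <> v -> 0 < t < 1 ->
    f (t *: u + (1 - t) *: v) < t * f u + (1 - t) * f v.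

Definition interior {R : rcfType} {n : nat} (D : 'cV[R]_n -> Prop) (z : 'cV[R]_n) : Prop :=
  exists2 delta : R, 0 < delta & forall u, normv (u - z) < delta -> D u.

Definition continuous_on {R : rcfType} {n : nat} (D : 'cV[R]_n -> Prop) (f : 'cV[R]_n -> R) :=
  forall z, D z -> forall e : R, 0 < e ->
    exists2 delta : R, 0 < delta &
      forall u, D u -> normv (u - z) < delta -> `|f u - f z| < e.

Definition vcontinuous_on {R : rcfType} {n p : nat} (D : 'cV[R]_n -> Prop)
    (F : 'cV[R]_n -> 'cV[R]_p) :=
  forall z, D z -> forall e : R, 0 < e ->
    exists2 delta : R, 0 < delta &
      forall u, D u -> normv (u - z) < delta -> normv (F u - F z) < e.

Definition is_gradient_at {R : rcfType} {n : nat} (D : 'cV[R]_n -> Prop)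
    (f : 'cV[R]_n -> R) (G z : 'cV[R]_n) :=
  forall e : R, 0 < e ->
    exists2 delta : R, 0 < delta &
      forall u, D u -> normv (u - z) < delta ->
        `|f u - f z - dotv G (u - z)| <= e * normv (u - z).

Notation bvec R d := (forall k, 'cV[R]_(d k)) (only parsing).

Definition bsub {R : rcfType} {K : nat} {d : 'I_K -> nat} (x z : bvec R d) : bvec R d :=
  fun k => x k - z k.

Definition bnorm {R : rcfType} {K : nat} {d : 'I_K -> nat} (x : bvec R d) : R :=
  Num.sqrt (\sum_(k < K) dotv (x k) (x k)).

Definition Emul {R : rcfType} {K m : nat} {d : 'I_K -> nat}
    (E : forall k : 'I_K, 'M[R]_(m, d k)) (x : bvec R d) : 'cV[R]_m :=
  \sum_(k < K) E k *m x k.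

Section AL.
Variables (R : rcfType) (K m : nat) (d pd : 'I_K -> nat).
Variables (E : forall k : 'I_K, 'M[R]_(m, d k)) (A : forall k : 'I_K, 'M[R]_(pd k, d k)).
Variables (q : 'cV[R]_m).
Variables (g : forall k : 'I_K, 'cV[R]_(pd k) -> R) (domg : forall k : 'I_K, 'cV[R]_(pd k) -> Prop).
Variables (h : forall k : 'I_K, 'cV[R]_(d k) -> R) (domh : forall k : 'I_K, 'cV[R]_(d k) -> Prop).
Variable (rho : R).

(* x lies in the effective domain of L(.;y) (L is +oo elsewhere) *)
Definition ALdom (x : bvec R d) : Prop :=
  forall k : 'I_K, domh k (x k) /\ domg k (A k *m x k).

Definition ALval (x : bvec R d) (y : 'cV[R]_m) : R :=
  \sum_(k < K) (g k (A k *m x k) + h k (x k))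
  + dotv y (q - Emul E x) + rho / 2 * (normv (q - Emul E x)) ^+ 2.

Definition admm_mix (xnew xold : bvec R d) (k : 'I_K) (z : 'cV[R]_(d k)) : bvec R d :=
  @dfwith _ (fun j : 'I_K => 'cV[R]_(d j))
    (fun j => if (j < k)%N then xnew j else xold j) k z.

Definition admm_block_min (X : forall k : 'I_K, 'cV[R]_(d k) -> Prop)
    (xnew xold : bvec R d) (y : 'cV[R]_m) (k : 'I_K) : Prop :=
  [/\ X k (xnew k),
      ALdom (admm_mix xnew xold k (xnew k)) &
      forall z, X k z -> ALdom (admm_mix xnew xold k z) ->
        ALval (admm_mix xnew xold k (xnew k)) y <= ALval (admm_mix xnew xold k z) y].

Definition is_prox (v p : bvec R d) : Prop :=
  (forall k : 'I_K, domh k (p k)) /\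
  forall u : bvec R d, (forall k : 'I_K, domh k (u k)) ->
    \sum_(k < K) h k (p k) + 1 / 2 * (bnorm (bsub v p)) ^+ 2
      <= \sum_(k < K) h k (u k) + 1 / 2 * (bnorm (bsub v u)) ^+ 2.

Definition pg_arg (gradg : forall k : 'I_K, 'cV[R]_(pd k) -> 'cV[R]_(pd k))
    (x : bvec R d) (y : 'cV[R]_m) : bvec R d :=
  fun k => x k - (A k)^T *m gradg k (A k *m x k) + (E k)^T *m y
           - rho *: ((E k)^T *m (Emul E x - q)).

(* the proximal gradient  tilde-nabla_x L(x;y) = x - prox_h(pg_arg x y) is
   expressed as  bsub x p  for p with  is_prox (pg_arg gradg x y) p. *)
End AL.
Arguments ALdom {R K d pd} A domg domh x.
Arguments ALval {R K m d pd} E A q g h rho x y.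
Arguments admm_mix {R K d} xnew xold k z _.
Arguments admm_block_min {R K m d pd} E A q g domg h domh rho X xnew xold y k.
Arguments is_prox {R K d} h domh v p.
Arguments pg_arg {R K m d pd} E A q rho gradg x y _.

(* The ADMM block update x_k^{r+1} and the block p_k of
   p = prox_h(x^r - grad_x(L - h)(x^r; y^r)) both minimize "h_k + smooth term",
   so each satisfies a first-order variational inequality.  Testing each at
   the other point and adding gives ||p_k - x_k^{r+1}|| <= ||c_k||, where c_k
   gathers the step x_k^r - x_k^{r+1}, a Lipschitz gradient difference and
   rho E_k^T times the change of E x during the sweep; all three are
   O(||x^{r+1} - x^r||).  Summing over the blocks gives the theorem. *)

From HB Require Import structures.
From mathcomp Require Import all_boot all_order all_algebra.
From mathcomp Require Import ring lra.
Import Order.TTheory GRing.Theory Num.Theory.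
Local Open Scope ring_scope.

Set Implicit Arguments.
Unset Strict Implicit.

Section Euclid.
Variable R : rcfType.

Lemma dotvC n (u v : 'cV[R]_n) : dotv u v = dotv v u.
Proof. by apply: eq_bigr => i _; rewrite mulrC. Qed.

Lemma dotvDl n (u v w : 'cV[R]_n) : dotv (u + v) w = dotv u w + dotv v w.
Proof. by rewrite /dotv -big_split; apply: eq_bigr => i _; rewrite mxE mulrDl. Qed.

Lemma dotvDr n (u v w : 'cV[R]_n) : dotv w (u + v) = dotv w u + dotv w v.
Proof. by rewrite dotvC dotvDl !(dotvC w). Qed.

Lemma dotvZl n a (u w : 'cV[R]_n) : dotv (a *: u) w = a * dotv u w.
Proof. by rewrite /dotv mulr_sumr; apply: eq_bigr => i _; rewrite mxE mulrA. Qed.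

Lemma dotvZr n a (u w : 'cV[R]_n) : dotv w (a *: u) = a * dotv w u.
Proof. by rewrite dotvC dotvZl dotvC. Qed.

Lemma dotvNl n (u w : 'cV[R]_n) : dotv (- u) w = - dotv u w.
Proof. by rewrite -scaleN1r dotvZl mulN1r. Qed.

Lemma dotvNr n (u w : 'cV[R]_n) : dotv w (- u) = - dotv w u.
Proof. by rewrite dotvC dotvNl dotvC. Qed.

Lemma dotvBl n (u v w : 'cV[R]_n) : dotv (u - v) w = dotv u w - dotv v w.
Proof. by rewrite dotvDl dotvNl. Qed.

Lemma dotvBr n (u v w : 'cV[R]_n) : dotv w (u - v) = dotv w u - dotv w v.
Proof. by rewrite dotvDr dotvNr. Qed.

Lemma dotv_mulmx n p (M : 'M[R]_(n, p)) u v : dotv u (M *m v) = dotv (M^T *m u) v.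
Proof.
rewrite /dotv; under eq_bigr do rewrite mxE big_distrr.
rewrite exchange_big; apply: eq_bigr => j _; rewrite mxE big_distrl.
by apply: eq_bigr => i _; rewrite mxE /= mulrCA mulrA.
Qed.

Lemma dotv_sqB n (u v : 'cV[R]_n) :
  dotv (u - v) (u - v) = dotv u u - 2 * dotv u v + dotv v v.
Proof. by rewrite !(dotvBl, dotvBr) (dotvC v u); ring. Qed.

Lemma dotvv_ge0 n (u : 'cV[R]_n) : 0 <= dotv u u.
Proof. by apply: sumr_ge0 => i _; rewrite -expr2 sqr_ge0. Qed.

Lemma dotvv_eq0 n (u : 'cV[R]_n) : dotv u u = 0 -> u = 0.
Proof.
move=> /psumr_eq0P u0; apply/matrixP => i j; rewrite (ord1 j) mxE.
have /eqP : u i 0 * u i 0 = 0 by apply: u0 => // k _; rewrite -expr2 sqr_ge0.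
by rewrite mulf_eq0 orbb => /eqP.
Qed.

Lemma normv_sqr n (u : 'cV[R]_n) : normv u ^+ 2 = dotv u u.
Proof. by rewrite sqr_sqrtr // dotvv_ge0. Qed.

Lemma normv_ge0 n (u : 'cV[R]_n) : 0 <= normv u.
Proof. exact: sqrtr_ge0. Qed.

Lemma normvZ n a (u : 'cV[R]_n) : normv (a *: u) = `|a| * normv u.
Proof. by rewrite /normv dotvZl dotvZr mulrA -expr2 sqrtrM ?sqr_ge0 // sqrtr_sqr. Qed.

Lemma normvN n (u : 'cV[R]_n) : normv (- u) = normv u.
Proof. by rewrite -scaleN1r normvZ normrN1 mul1r. Qed.

Lemma normv0 n : normv (0 : 'cV[R]_n) = 0.
Proof. by rewrite -(scale0r 0) normvZ normr0 mul0r. Qed.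

(* Cauchy-Schwarz, squared form: expand the square of |(v.v) u - (u.v) v|. *)
Lemma dotv_sqr_le n (u v : 'cV[R]_n) : dotv u v ^+ 2 <= dotv u u * dotv v v.
Proof.
have := dotvv_ge0 (dotv v v *: u - dotv u v *: v).
rewrite dotv_sqB !(dotvZl, dotvZr).
have [/dotvv_eq0 ->|vv_neq0] := eqVneq (dotv v v) 0.
  by rewrite -(scale0r (0 : 'cV[R]_n)) !dotvZr !mul0r expr2 !mulr0.
have vv_gt0 : 0 < dotv v v by rewrite lt_def vv_neq0 dotvv_ge0.
set s := dotv v v; set t := dotv u v => H.
have : 0 <= s * (dotv u u * s - t ^+ 2) by move: H; congr (_ <= _); ring.
by rewrite pmulr_rge0 // subr_ge0.
Qed.

Lemma cauchy_schwarz n (u v : 'cV[R]_n) : dotv u v <= normv u * normv v.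
Proof.
apply: (le_trans (ler_norm _)).
by rewrite -sqrtr_sqr -sqrtrM ?dotvv_ge0 // ler_sqrt ?dotv_sqr_le // mulr_ge0 ?dotvv_ge0.
Qed.

Lemma normvD n (u v : 'cV[R]_n) : normv (u + v) <= normv u + normv v.
Proof.
rewrite -(ger0_norm (addr_ge0 (normv_ge0 u) (normv_ge0 v))) -sqrtr_sqr ler_sqrt ?sqr_ge0 //.
rewrite !(dotvDl, dotvDr) (dotvC v u) sqrrD !normv_sqr.
by have := cauchy_schwarz u v; lra.
Qed.

Lemma normvB n (u v : 'cV[R]_n) : normv (u - v) <= normv u + normv v.
Proof. by rewrite -(normvN v) normvD. Qed.

Lemma normv_sum n (I : finType) (F : I -> 'cV[R]_n) :
  normv (\sum_i F i) <= \sum_i normv (F i).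
Proof.
elim/big_rec2: _ => [|i s u _ IH]; first by rewrite normv0.
by apply: le_trans (normvD _ _) _; rewrite lerD2l.
Qed.

Definition mxnorm n p (M : 'M[R]_(n, p)) : R :=
  Num.sqrt (\sum_(i < n) dotv (row i M)^T (row i M)^T).

Lemma mxnorm_ge0 n p (M : 'M[R]_(n, p)) : 0 <= mxnorm M.
Proof. exact: sqrtr_ge0. Qed.

(* Each entry of M u is a dot product with a row, then Cauchy-Schwarz. *)
Lemma normv_mulmx n p (M : 'M[R]_(n, p)) u : normv (M *m u) <= mxnorm M * normv u.
Proof.
have rowE i : (M *m u) i 0 = dotv (row i M)^T u.
  by rewrite mxE; apply: eq_bigr => j _; rewrite !mxE.
rewrite /mxnorm /normv -sqrtrM; last by apply: sumr_ge0 => i _; apply: dotvv_ge0.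
rewrite ler_sqrt; last by rewrite mulr_ge0 // ?dotvv_ge0 //; apply: sumr_ge0 => i _; apply: dotvv_ge0.
rewrite mulr_suml; apply: ler_sum => i _; rewrite -expr2 rowE; exact: dotv_sqr_le.
Qed.

Lemma interior_sub n (D : 'cV[R]_n -> Prop) z : interior D z -> D z.
Proof. by case=> delta delta_gt0; apply; rewrite subrr normv0. Qed.

End Euclid.

Section Blocks.
Variables (R : rcfType) (K : nat) (d : 'I_K -> nat).

Lemma sum_dfwith (V : zmodType) (T : 'I_K -> Type) (F : forall j, T j -> V)
    (x : forall j, T j) (k : 'I_K) (w : T k) :
  \sum_j F j (dfwith x w j) = F k w + \sum_(j | j != k) F j (x j).
Proof.
rewrite (bigD1 k) //= dfwith_in; congr (_ + _).
by apply: eq_bigr => j jk; rewrite dfwith_out // eq_sym.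
Qed.

Lemma bnorm_sqr (x : forall j, 'cV[R]_(d j)) : bnorm x ^+ 2 = \sum_j dotv (x j) (x j).
Proof. by rewrite sqr_sqrtr //; apply: sumr_ge0 => j _; apply: dotvv_ge0. Qed.

Lemma normv_le_bnorm (x : forall j, 'cV[R]_(d j)) j : normv (x j) <= bnorm x.
Proof.
rewrite ler_sqrt; last by apply: sumr_ge0 => i _; apply: dotvv_ge0.
by rewrite (bigD1 j) //= lerDl; apply: sumr_ge0 => i _; apply: dotvv_ge0.
Qed.

Lemma bnorm_le_sum (x : forall j, 'cV[R]_(d j)) : bnorm x <= \sum_j normv (x j).
Proof.
have nx_ge0 : 0 <= \sum_j normv (x j) by apply: sumr_ge0 => j _; apply: normv_ge0.
rewrite -(ger0_norm nx_ge0) -sqrtr_sqr ler_sqrt ?sqr_ge0 //.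
rewrite expr2 mulr_suml; apply: ler_sum => j _; rewrite -normv_sqr expr2 ler_wpM2l ?normv_ge0 //.
by rewrite (bigD1 j) //= lerDl; apply: sumr_ge0 => i _; apply: normv_ge0.
Qed.

End Blocks.

Section DirectionalDerivative.
Variables (R : rcfType) (n : nat).

Definition dderiv_le (phi : 'cV[R]_n -> R) (x z : 'cV[R]_n) (s : R) : Prop :=
  forall e : R, 0 < e -> exists2 t0 : R, 0 < t0 &
    forall t, 0 < t -> t <= t0 -> phi (t *: z + (1 - t) *: x) - phi x - t * s <= t * e.

Lemma dderiv_le_quad (phi : 'cV[R]_n -> R) x z s (Q : R) : 0 <= Q ->
  (forall t, 0 < t -> t <= 1 -> phi (t *: z + (1 - t) *: x) - phi x - t * s <= t ^+ 2 * Q) ->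
  dderiv_le phi x z s.
Proof.
move=> Q_ge0 rem e e_gt0; have Q1_gt0 : 0 < Q + 1 by rewrite ltr_wpDl.
exists (Num.min 1 (e / (Q + 1))); first by rewrite lt_min ltr01 divr_gt0.
move=> t t_gt0; rewrite le_min => /andP[t_le1 t_le]; apply: (le_trans (rem t t_gt0 t_le1)).
rewrite expr2 -mulrA ler_pM2l //; apply: (le_trans (ler_wpM2r Q_ge0 t_le)).
by rewrite mulrAC ler_pdivrMr // ler_pM2l //; lra.
Qed.

Lemma dderiv_le_add (phi psi : 'cV[R]_n -> R) x z s1 s2 :
  dderiv_le phi x z s1 -> dderiv_le psi x z s2 ->
  dderiv_le (fun w => phi w + psi w) x z (s1 + s2).
Proof.
move=> dphi dpsi e e_gt0; have e2_gt0 : 0 < e / 2 by rewrite divr_gt0.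
have [t1 t1_gt0 H1] := dphi _ e2_gt0; have [t2 t2_gt0 H2] := dpsi _ e2_gt0.
exists (Num.min t1 t2); first by rewrite lt_min t1_gt0.
move=> t t_gt0; rewrite le_min => /andP[tt1 tt2].
have := H1 t t_gt0 tt1; have := H2 t t_gt0 tt2; lra.
Qed.

Lemma dderiv_le_gradient p (D : 'cV[R]_p -> Prop) (f : 'cV[R]_p -> R) G
    (M : 'M[R]_(p, n)) x z :
  is_gradient_at D f G (M *m x) ->
  (forall t, 0 < t -> t <= 1 -> D (M *m (t *: z + (1 - t) *: x))) ->
  dderiv_le (fun w => f (M *m w)) x z (dotv G (M *m (z - x))).
Proof.
move=> grad segD e e_gt0.
set N := normv (M *m (z - x)); have N1_gt0 : 0 < N + 1 by rewrite ltr_wpDl ?normv_ge0.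
have [delta delta_gt0 Hd] := grad _ (divr_gt0 e_gt0 N1_gt0).
exists (Num.min 1 (delta / (N + 1))); first by rewrite lt_min ltr01 divr_gt0.
move=> t t_gt0; rewrite le_min => /andP[t_le1 t_le].
have stepE : M *m (t *: z + (1 - t) *: x) - M *m x = t *: (M *m (z - x)).
  by rewrite -mulmxBr scalemxAr; congr (_ *m _); apply/matrixP => i j; rewrite !mxE; ring.
have nstep : normv (M *m (t *: z + (1 - t) *: x) - M *m x) = t * N.
  by rewrite stepE normvZ gtr0_norm.
have tN_lt : t * N < delta.
  have : t * (N + 1) <= delta by rewrite -ler_pdivlMr.
  by apply: lt_le_trans; rewrite ltr_pM2l //; lra.
have := Hd _ (segD t t_gt0 t_le1); rewrite nstep stepE dotvZr => /(_ tN_lt) /ler_normlP[_].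
have : e / (N + 1) * (t * N) <= t * e.
  by rewrite mulrC -mulrA ler_pM2l // mulrC mulrAC ler_pdivrMr // ler_pM2l //; lra.
lra.
Qed.

Lemma convex_min_optimality (D : 'cV[R]_n -> Prop) (h phi : 'cV[R]_n -> R) x z s :
  convex_fun_on D h -> D x -> D z ->
  (forall u, D u -> h x + phi x <= h u + phi u) ->
  dderiv_le phi x z s -> 0 <= h z - h x + s.
Proof.
move=> [convD convh] Dx Dz xmin dphi; rewrite leNgt; apply/negP => S_lt0.
have e_gt0 : 0 < - (h z - h x + s) / 2 by rewrite divr_gt0 // oppr_gt0.
have [t0 t0_gt0 Ht] := dphi _ e_gt0.
set t := Num.min t0 1; have t_gt0 : 0 < t by rewrite lt_min t0_gt0 ltr01.
have t01 : 0 <= t <= 1 by rewrite ltW //= ge_min lexx orbT.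
have tt0 : t <= t0 by rewrite ge_min lexx.
have Hd := Ht t t_gt0 tt0.
have Hconv := convh z x t Dz Dx t01.
have Hmin := xmin _ (convD z x t Dz Dx t01).
have : 0 < t * - (h z - h x + s) by rewrite mulr_gt0 // oppr_gt0.
nra.
Qed.

End DirectionalDerivative.

Lemma optimality_pair_bound (R : rcfType) (n : nat) (hx hp : R) (x p a v : 'cV[R]_n) :
  0 <= hp - hx + dotv a (p - x) -> 0 <= hx - hp + dotv (p - v) (x - p) ->
  normv (p - x) <= normv (a + v - x).
Proof.
move=> opt_x opt_p.
have sq_le : normv (p - x) ^+ 2 <= normv (a + v - x) * normv (p - x).
  apply: le_trans (cauchy_schwarz _ _); rewrite normv_sqr.
  have -> : a + v - x = a - (p - v) + (p - x) by apply/matrixP => i j; rewrite !mxE; ring.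
  rewrite -(opprB p x) dotvNr in opt_p; rewrite [in X in _ <= X]dotvDl [in X in _ <= X]dotvBl; lra.
have [->|px_gt0] := eqVneq (normv (p - x)) 0; first exact: normv_ge0.
by rewrite expr2 ler_pM2r // in sq_le; rewrite lt_def px_gt0 normv_ge0.
Qed.

(* The sections below have block-indexed function variables, whose index
   argument must stay explicit. *)
Unset Implicit Arguments.
Set Strict Implicit.

Section ProxOptimality.
Variables (R : rcfType) (K : nat) (d : 'I_K -> nat).
Variables (h : forall k : 'I_K, 'cV[R]_(d k) -> R) (domh : forall k : 'I_K, 'cV[R]_(d k) -> Prop).
Hypothesis h_convex : forall k : 'I_K, convex_fun_on (domh k) (h k).

Lemma prox_optimality (v p : forall k, 'cV[R]_(d k)) (k : 'I_K) (z : 'cV[R]_(d k)) :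
  is_prox h domh v p -> domh k z ->
  0 <= h k z - h k (p k) + dotv (p k - v k) (z - p k).
Proof.
move=> [domp pmin] Dz.
pose phi w := 1 / 2 * dotv (v k - w) (v k - w).
apply: (convex_min_optimality (h_convex k) (domp k) Dz (phi := phi)).
  move=> u Du; have := pmin (dfwith p u).
  have Dpu : forall j, domh j (dfwith p u j) by move=> j; case: dfwithP.
  rewrite !bnorm_sqr /bsub => /(_ Dpu).
  rewrite (sum_dfwith (fun j w => h j w)) (sum_dfwith (fun j w => dotv (v j - w) (v j - w))).
  rewrite [\sum_j h j _](bigD1 k) //= [\sum_j dotv _ _](bigD1 k) //= /phi; lra.
apply: (dderiv_le_quad (Q := 1 / 2 * dotv (z - p k) (z - p k))).
  by rewrite mulr_ge0 ?dotvv_ge0 // divr_ge0.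
move=> t _ _; rewrite /phi.
have -> : v k - (t *: z + (1 - t) *: p k) = (v k - p k) - t *: (z - p k).
  by apply/matrixP => i j; rewrite !mxE; ring.
rewrite (dotv_sqB (v k - p k)) !(dotvZl, dotvZr) -(opprB (v k)) dotvNl.
by rewrite le_eqVlt; apply/orP; left; apply/eqP; field.
Qed.

End ProxOptimality.
Arguments prox_optimality {R K d h domh} h_convex {v p k z}.

Section BlockStepOptimality.
Variables (R : rcfType) (K m : nat) (d pd : 'I_K -> nat).
Variables (E : forall k : 'I_K, 'M[R]_(m, d k)) (A : forall k : 'I_K, 'M[R]_(pd k, d k)).
Variables (q : 'cV[R]_m).
Variables (g : forall k : 'I_K, 'cV[R]_(pd k) -> R) (domg : forall k : 'I_K, 'cV[R]_(pd k) -> Prop).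
Variables (gradg : forall k : 'I_K, 'cV[R]_(pd k) -> 'cV[R]_(pd k)).
Variables (h : forall k : 'I_K, 'cV[R]_(d k) -> R) (domh : forall k : 'I_K, 'cV[R]_(d k) -> Prop).
Variables (X : forall k : 'I_K, 'cV[R]_(d k) -> Prop) (rho : R).
Hypothesis rho_gt0 : 0 < rho.
Hypothesis h_convex : forall k : 'I_K, convex_fun_on (domh k) (h k).
Hypothesis domh_X : forall (k : 'I_K) u, domh k u -> X k u.
Hypothesis X_interior : forall (k : 'I_K) u, X k u -> interior (domg k) (A k *m u).
Hypothesis g_gradient : forall (k : 'I_K) z,
  interior (domg k) z -> is_gradient_at (domg k) (g k) (gradg k z) z.

Lemma admm_block_optimality (xn xo : forall k, 'cV[R]_(d k)) y (k : 'I_K) (z : 'cV[R]_(d k)) :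
  admm_block_min E A q g domg h domh rho X xn xo y k -> domh k z ->
  0 <= h k z - h k (xn k) +
     dotv ((A k)^T *m gradg k (A k *m xn k) - (E k)^T *m y
           + rho *: ((E k)^T *m (Emul E (admm_mix xn xo k (xn k)) - q))) (z - xn k).
Proof.
case=> Xxn dom_xn xn_min Dz.
have Dxn : domh k (xn k) by have := (dom_xn k).1; rewrite /admm_mix dfwith_in.
set xs := xn k; pose f (j : 'I_K) := if (j < k)%N then xn j else xo j.
pose c0 := q - \sum_(j | j != k) E j *m f j.
pose C := \sum_(j | j != k) (g j (A j *m f j) + h j (f j)).
pose quad w := C + dotv y (c0 - E k *m w) + rho / 2 * dotv (c0 - E k *m w) (c0 - E k *m w).
have residualE w : q - Emul E (admm_mix xn xo k w) = c0 - E k *m w.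
  by rewrite /Emul /admm_mix (sum_dfwith (fun j v => E j *m v)) opprD addrA addrAC.
have ALvalE w : ALval E A q g h rho (admm_mix xn xo k w) y = h k w + (g k (A k *m w) + quad w).
  rewrite /ALval residualE normv_sqr /admm_mix.
  by rewrite (sum_dfwith (fun j v => g j (A j *m v) + h j v)) -/C /quad; ring.
apply: (convex_min_optimality (h_convex k) Dxn Dz (phi := fun w => g k (A k *m w) + quad w)).
  move=> u Du; rewrite -!ALvalE; apply: xn_min; first exact: domh_X _ _ Du.
  move=> j; have [<-|kj] := eqVneq k j; last by have := dom_xn j; rewrite /admm_mix !dfwith_out.
  by rewrite /admm_mix dfwith_in; split=> //; exact: interior_sub (X_interior _ _ (domh_X _ _ Du)).
set e0 := c0 - E k *m xs; set dd := E k *m (z - xs).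
have -> : dotv ((A k)^T *m gradg k (A k *m xs) - (E k)^T *m y
           + rho *: ((E k)^T *m (Emul E (admm_mix xn xo k xs) - q))) (z - xs)
          = dotv (gradg k (A k *m xs)) (A k *m (z - xs)) + (- dotv y dd - rho * dotv e0 dd).
  rewrite -(opprB q) residualE -/e0 {1}dotvDl {1}dotvBl dotvZl mulmxN dotvNl.
  by rewrite -!dotv_mulmx; ring.
apply: dderiv_le_add.
  apply: dderiv_le_gradient; first exact: g_gradient (X_interior _ _ Xxn).
  move=> t t_gt0 t_le1; apply: interior_sub (X_interior _ _ (domh_X _ _ _)).
  by apply: (h_convex k).1 => //; rewrite ltW.
apply: (dderiv_le_quad (Q := rho / 2 * dotv dd dd)).
  by rewrite mulr_ge0 ?dotvv_ge0 // divr_ge0 // ltW.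
move=> t _ _; rewrite /quad -/e0.
have -> : c0 - E k *m (t *: z + (1 - t) *: xs) = e0 - t *: dd.
  have -> : t *: z + (1 - t) *: xs = xs + t *: (z - xs).
    by apply/matrixP => i j; rewrite !mxE; ring.
  by rewrite /e0 /dd mulmxDr scalemxAr opprD addrA.
rewrite (dotv_sqB e0) dotvBr !(dotvZl, dotvZr).
by rewrite le_eqVlt; apply/orP; left; apply/eqP; field.
Qed.

End BlockStepOptimality.
Arguments admm_block_optimality {R K m d pd E A q g domg gradg h domh X rho}
  rho_gt0 h_convex domh_X X_interior g_gradient {xn xo y k z}.

Section ProximalGradientBound.
Variables (R : rcfType) (K m : nat) (d pd : 'I_K -> nat).
Variables (E : forall k : 'I_K, 'M[R]_(m, d k)) (A : forall k : 'I_K, 'M[R]_(pd k, d k)).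
Variables (q : 'cV[R]_m).
Variables (g : forall k : 'I_K, 'cV[R]_(pd k) -> R) (domg : forall k : 'I_K, 'cV[R]_(pd k) -> Prop).
Variables (gradg : forall k : 'I_K, 'cV[R]_(pd k) -> 'cV[R]_(pd k)).
Variables (h : forall k : 'I_K, 'cV[R]_(d k) -> R) (domh : forall k : 'I_K, 'cV[R]_(d k) -> Prop).
Variables (X : forall k : 'I_K, 'cV[R]_(d k) -> Prop) (Lc rho : R).
Hypothesis rho_gt0 : 0 < rho.
Hypothesis h_convex : forall k : 'I_K, convex_fun_on (domh k) (h k).
Hypothesis domh_X : forall (k : 'I_K) u, domh k u -> X k u.
Hypothesis X_interior : forall (k : 'I_K) u, X k u -> interior (domg k) (A k *m u).
Hypothesis g_gradient : forall (k : 'I_K) z,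
  interior (domg k) z -> is_gradient_at (domg k) (g k) (gradg k z) z.
Hypothesis Lc_ge0 : 0 <= Lc.
Hypothesis grad_lipschitz : forall (k : 'I_K) u u', X k u -> X k u' ->
  normv ((A k)^T *m gradg k (A k *m u) - (A k)^T *m gradg k (A k *m u'))
    <= Lc * normv (u - u').

Definition Enorm : R := \sum_(j < K) mxnorm (E j).

Lemma Emul_mix_dist (xn xo : forall k, 'cV[R]_(d k)) (k : 'I_K) :
  normv (Emul E (admm_mix xn xo k (xn k)) - Emul E xo) <= Enorm * bnorm (bsub xn xo).
Proof.
rewrite /Emul -sumrB mulr_suml; apply: le_trans (normv_sum _) _; apply: ler_sum => j _.
rewrite -mulmxBr; apply: le_trans (normv_mulmx _ _) _; rewrite ler_wpM2l ?mxnorm_ge0 //.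
have step i : normv (xn i - xo i) <= bnorm (bsub xn xo) by apply: (normv_le_bnorm (bsub xn xo)).
rewrite /admm_mix; case: dfwithP => [|i _]; first exact: step.
by case: ifP => _; rewrite ?step // subrr normv0 sqrtr_ge0.
Qed.

Lemma prox_gradient_block_bound (xn xo p : forall k, 'cV[R]_(d k)) y (k : 'I_K) :
  admm_block_min E A q g domg h domh rho X xn xo y k -> X k (xo k) ->
  is_prox h domh (pg_arg E A q rho gradg xo y) p ->
  normv (xo k - p k) <= (2 + Lc + rho * mxnorm (E k)^T * Enorm) * bnorm (bsub xn xo).
Proof.
move=> step Xxo prox_p; set Dl := bnorm (bsub xn xo); set xs := xn k.
have Dxs : domh k xs by case: step => _ /(_ k)[]; rewrite /admm_mix dfwith_in.
have near_step : normv (xs - xo k) <= Dl by apply: (normv_le_bnorm (bsub xn xo)).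
have opt_xs := admm_block_optimality rho_gt0 h_convex domh_X X_interior g_gradient step (prox_p.1 k).
have opt_p := prox_optimality h_convex prox_p Dxs.
have close_p := optimality_pair_bound opt_xs opt_p.
set W := Emul E (admm_mix xn xo k xs) - Emul E xo.
set Lip := (A k)^T *m gradg k (A k *m xs) - (A k)^T *m gradg k (A k *m xo k).
set v := pg_arg E A q rho gradg xo y in close_p.
have residual_split : (E k)^T *m W = (E k)^T *m (Emul E (admm_mix xn xo k xs) - q)
                                     - (E k)^T *m (Emul E xo - q).
  by rewrite -mulmxBr opprB addrA subrK.
rewrite [X in _ <= normv X](_ : _ = (xo k - xs) + Lip + rho *: ((E k)^T *m W)) in close_p; last first.
  rewrite residual_split /v /pg_arg /Lip.
  by apply/matrixP => i j; rewrite !mxE; ring.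
have back_step : normv (xo k - xs) <= Dl by rewrite -normvN opprB.
have Lip_le : normv Lip <= Lc * Dl.
  apply: le_trans (grad_lipschitz _ _ _ (domh_X _ _ Dxs) Xxo) _.
  by rewrite ler_wpM2l.
have W_le : normv ((E k)^T *m W) <= mxnorm (E k)^T * (Enorm * Dl).
  by apply: le_trans (normv_mulmx _ _) _; rewrite ler_wpM2l ?mxnorm_ge0 ?Emul_mix_dist.
have cc_le : normv (xo k - xs + Lip + rho *: ((E k)^T *m W))
             <= Dl + Lc * Dl + rho * (mxnorm (E k)^T * (Enorm * Dl)).
  apply: le_trans (normvD _ _) _; rewrite normvZ gtr0_norm //.
  apply: lerD; first by apply: le_trans (normvD _ _) _; apply: lerD.
  by rewrite ler_wpM2l // ltW.
have split_p : normv (xo k - p k) <= normv (xo k - xs) + normv (p k - xs).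
  by have := normvB (xo k - xs) (p k - xs); rewrite opprB addrA subrK.
apply: le_trans split_p _.
have -> : (2 + Lc + rho * mxnorm (E k)^T * Enorm) * Dl
          = Dl + (Dl + Lc * Dl + rho * (mxnorm (E k)^T * (Enorm * Dl))) by ring.
exact: lerD back_step (le_trans close_p cc_le).
Qed.

End ProximalGradientBound.
Arguments Enorm {R K m d} E.
Arguments prox_gradient_block_bound {R K m d pd E A q g domg gradg h domh X Lc rho}
  rho_gt0 h_convex domh_X X_interior g_gradient Lc_ge0 grad_lipschitz {xn xo p y k}.

Theorem lemma2p5 (R : rcfType) (K m : nat) (d pd : 'I_K -> nat)
  (E : forall k : 'I_K, 'M[R]_(m, d k)) (A : forall k : 'I_K, 'M[R]_(pd k, d k))
  (q : 'cV[R]_m)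
  (g : forall k : 'I_K, 'cV[R]_(pd k) -> R) (domg : forall k : 'I_K, 'cV[R]_(pd k) -> Prop)
  (gradg : forall k : 'I_K, 'cV[R]_(pd k) -> 'cV[R]_(pd k))
  (h : forall k : 'I_K, 'cV[R]_(d k) -> R) (domh : forall k : 'I_K, 'cV[R]_(d k) -> Prop)
  (X : forall k : 'I_K, 'cV[R]_(d k) -> Prop)
  (Lc rho alpha : R) :
  0 < rho -> 0 < alpha ->
  (* A(b): g_k, h_k convex and continuous on their domains *)
  (forall k, convex_fun_on (domg k) (g k) /\ continuous_on (domg k) (g k)) ->
  (forall k, convex_fun_on (domh k) (h k) /\ continuous_on (domh k) (h k)) ->
  (* the constraint x_k \in X_k is absorbed into h_k *)
  (forall k u, domh k u -> X k u) ->
  (* A(c): g_k strictly convex and C^1 on the interior of its domain *)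
  (forall k, strictly_convex_on (interior (domg k)) (g k)) ->
  (forall k z, interior (domg k) z -> is_gradient_at (domg k) (g k) (gradg k z) z) ->
  (forall k, vcontinuous_on (interior (domg k)) (gradg k)) ->
  (* grad g_k (A_k x_k) is defined for x_k in X_k *)
  (forall k u, X k u -> interior (domg k) (A k *m u)) ->
  (* A(c): Lipschitz condition *)
  0 < Lc ->
  (forall k u u', X k u -> X k u' ->
     normv ((A k)^T *m gradg k (A k *m u) - (A k)^T *m gradg k (A k *m u'))
       <= Lc * normv (u - u')) ->
  exists2 sigma : R, 0 < sigma &
    forall (x : nat -> bvec R d) (y : nat -> 'cV[R]_m),
      (forall (r : nat) (k : 'I_K),
         admm_block_min E A q g domg h domh rho X (x r.+1) (x r) (y r) k) ->
      (forall r : nat, y r.+1 = y r + alpha *: (q - Emul E (x r.+1))) ->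
      forall r : nat, (1 <= r)%N ->
      forall p : bvec R d, is_prox h domh (pg_arg E A q rho gradg (x r) (y r)) p ->
        bnorm (bsub (x r) p) <= sigma * bnorm (bsub (x r.+1) (x r)).
Proof.
move=> rho_gt0 _ _ h_convex_cont domh_X _ g_gradient _ X_interior Lc_gt0 grad_lipschitz.
have h_convex k : convex_fun_on (domh k) (h k) by case: (h_convex_cont k).
pose c := 2 + Lc + rho * (\sum_k mxnorm (E k)^T) * Enorm E.
have c_ge0 : 0 <= c.
  by rewrite !addr_ge0 ?mulr_ge0 ?sumr_ge0 ?ltW // => *; rewrite mxnorm_ge0.
exists (1 + K%:R * c); first by rewrite ltr_wpDr ?mulr_ge0.
move=> x y steps _ r r_ge1 p prox_p.
have feasible k : X k (x r k).
  by case: r r_ge1 {prox_p} => // r _; case: (steps r k).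
have block_le k : normv (x r k - p k) <= c * bnorm (bsub (x r.+1) (x r)).
  apply: le_trans (prox_gradient_block_bound rho_gt0 h_convex domh_X X_interior g_gradient
    (ltW Lc_gt0) grad_lipschitz (steps r k) (feasible k) prox_p) _.
  apply: ler_wpM2r; first exact: sqrtr_ge0.
  rewrite /c lerD2l -!mulrA ler_pM2l //; apply: ler_wpM2r.
    by apply: sumr_ge0 => j _; apply: mxnorm_ge0.
  by rewrite (bigD1 k) //= lerDl sumr_ge0 // => j _; rewrite mxnorm_ge0.
apply: le_trans (bnorm_le_sum _) _; apply: le_trans (ler_sum _ (fun k _ => block_le k)) _.
rewrite sumr_const card_ord -mulrnAl; apply: ler_wpM2r; first exact: sqrtr_ge0.
by rewrite mulr_natl lerDr.
Qed.
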